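(* Let $m\ge 1$ and $n\ge 3$ be odd integers, $k=1$, and $g\ge3$. Then an $RSM_\Gamma(\Gamma,g;[\,^{8mn-1}m,\ ^{1}2n])$ exists.
   Context: Here $G=\mathbb{Z}_m\times\mathbb{Z}_{4n}$ and $\Gamma$ is the generalized dihedral group on $G$: underlying set $G\times\mathbb{Z}_2$ with operation $(x,\tau)+(x',\tau')=(x+(-1)^\tau x',\tau+\tau')$. $[\,^{a}x,\,^{b}y]$ denotes the multiset with $a$ copies of $x$ and $b$ copies of $y$. An $RSM_\Gamma(\Gamma,g;L)$, for a list $L$ of $|\Gamma|$ positive integers, is a $|\Gamma|\times g$ matrix with entries in $\Gamma$ such that each column is a permutation (arrangement) of $\Gamma$ and the multiset of orders of the left-to-right row sums equals $L$. *)

From HB Require Import structures.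
From mathcomp Require Import all_boot all_order all_algebra all_fingroup.
Set Implicit Arguments. Unset Strict Implicit. Unset Printing Implicit Defensive.
Import GRing.Theory.

(* Z_m for m >= 1, as a finite Z-module: the ordinals 'I_m with addition mod m.
   (For m >= 1, (m.-1).+1 = m.)  Note: 'I_k.+1 carries a canonical finZmodType. *)
Definition Zmod (m : nat) : finZmodType := 'I_(m.-1).+1.

(* The generalized dihedral group Dih(G) on an abelian group G:
   underlying set G x Z_2 (here bool), with
   (x,t) . (x',t') = (x + (-1)^t x', t + t'). *)
Section GenDihedral.
Local Open Scope ring_scope.
Variable G : finZmodType.

Definition gdihedral : Type := (G * bool)%type.
HB.instance Definition _ := Finite.on gdihedral.

Definition sgn_act (t : bool) (x : G) : G := if t then - x else x.

Definition gd_mul (a b : gdihedral) : gdihedral :=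
  (a.1 + sgn_act a.2 b.1, addb a.2 b.2).
Definition gd_one : gdihedral := (0, false).
Definition gd_inv (a : gdihedral) : gdihedral :=
  (if a.2 then a.1 else - a.1, a.2).

Lemma gd_mulA : associative gd_mul.
Proof.
move=> a b c; case: a => x t; case: b => y s; case: c => z r.
rewrite /gd_mul /sgn_act /=; congr pair; last by rewrite addbA.
by case: t; case: s => /=; rewrite ?opprD ?opprK addrA.
Qed.

Lemma gd_mul1 : left_id gd_one gd_mul.
Proof. by move=> a; case: a => x t; rewrite /gd_mul /= add0r. Qed.

Lemma gd_mulV : left_inverse gd_one gd_inv gd_mul.
Proof.
move=> a; case: a => x t; rewrite /gd_mul /gd_inv /sgn_act /= addbb.
by case: t; rewrite ?addrN ?addNr.
Qed.

HB.instance Definition _ :=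
  Finite_isGroup.Build gdihedral gd_mulA gd_mul1 gd_mulV.
End GenDihedral.

Definition ZmZ4n (m n : nat) : Type := (Zmod m * Zmod (4 * n))%type.
HB.instance Definition _ m n := GRing.Zmodule.on (ZmZ4n m n).
HB.instance Definition _ m n := Finite.on (ZmZ4n m n).

Definition Gamma (m n : nat) : finGroupType := gdihedral (ZmZ4n m n).

(* RSM_Gamma(Gamma, g; L): a |Gamma| x g matrix with entries in Gamma, each
   column an arrangement (bijective listing) of Gamma, such that the multiset of
   the orders of the left-to-right row sums (products, in multiplicative
   notation) equals L. *)
Definition is_RSM (gT : finGroupType) (g : nat)
    (M : 'M[gT]_(#|gT|, g)) (L : seq nat) : Prop :=
  (forall j : 'I_g, injective (fun i : 'I_#|gT| => M i j)) /\
  perm_eq [seq #[(\prod_(j < g) M i j)%g]%g | i <- enum 'I_#|gT|] L.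

Definition RSM_exists (gT : finGroupType) (g : nat) (L : seq nat) : Prop :=
  exists M : 'M[gT]_(#|gT|, g), is_RSM M L.

(* Valid designs with 3 and 4 columns are checked by computation, and the
      theorem follows by choosing the design with the parity of g. *)

From HB Require Import structures.
From mathcomp Require Import all_boot all_order all_algebra all_fingroup.
From mathcomp Require Import cyclic zify.
Set Implicit Arguments. Unset Strict Implicit. Unset Printing Implicit Defensive.
Import GRing.Theory FinRing.Theory.

Section RowSumMatrices.
Variable gT : finGroupType.

(* An RSM may be built with rows indexed by any finite type of the right size:
   the row order is irrelevant, only the multiset of row orders matters. *)
Lemma RSM_of_rows (g : nat) (X : finType) (E : X -> 'I_g -> gT) (L : seq nat) :
  #|X| = #|gT| -> (forall j, injective (E^~ j)) ->
  perm_eq [seq #[\prod_(j < g) E x j]%g | x <- enum X] L -> RSM_exists gT g L.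
Proof.
move=> cardX E_inj permL.
pose r (i : 'I_#|gT|) : X := enum_val (cast_ord (esym cardX) i).
have r_inj : injective r by move=> i1 i2 /enum_val_inj /cast_ord_inj.
exists (\matrix_(i, j) E (r i) j)%R; split.
  by move=> j i1 i2; rewrite !mxE => /E_inj /r_inj.
apply: perm_trans permL.
have -> : [seq #[\prod_(j < g) (\matrix_(i, j) E (r i) j)%R i j]%g | i <- enum 'I_#|gT|]
        = [seq #[\prod_(j < g) E x j]%g | x <- map r (enum 'I_#|gT|)].
  by rewrite -map_comp; apply: eq_map => i /=; under eq_bigr do rewrite mxE.
apply: perm_map; apply: uniq_perm; rewrite ?(map_inj_uniq r_inj) ?enum_uniq //.
move=> x; rewrite mem_enum; apply/mapP.
exists (cast_ord cardX (enum_rank x)); first by rewrite mem_enum.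
by rewrite /r cast_ordK enum_rankK.
Qed.

(* Appending a column c and the column of inverses c^-1 leaves every row
   product unchanged, so an RSM with g columns yields one with g + 2. *)
Lemma RSM_add2 (g : nat) (L : seq nat) : RSM_exists gT g L -> RSM_exists gT (g + 2) L.
Proof.
case=> M [M_inj permL].
pose c (i : 'I_#|gT|) : gT := enum_val i.
pose N : 'M[gT]_(#|gT|, 2) := (\matrix_(i, j) (if j == 0 :> nat then c i else (c i)^-1)%g)%R.
exists (row_mx M N); split.
  move=> j i1 i2; rewrite -(splitK j); case: (split j) => k /=; rewrite ?row_mxEl ?row_mxEr.
    exact: M_inj.
  rewrite !mxE; case: (k == 0 :> nat) => [|/invg_inj]; exact: enum_val_inj.
apply: perm_trans permL; rewrite (@eq_map _ _ _ (fun i => #[\prod_(j < g) M i j]%g)) // => i.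
rewrite big_split_ord big_ord_recr big_ord1 !row_mxEr !mxE /= mulgV mulg1.
by under eq_bigr do rewrite row_mxEl.
Qed.

Lemma RSM_add_even (g J : nat) (L : seq nat) :
  RSM_exists gT J L -> J <= g -> ~~ odd (g - J) -> RSM_exists gT g L.
Proof.
move=> RJ leJg even_gJ.
have [q ->] : exists q, g = J + q.*2.
  exists (g - J)./2; have := odd_double_half (g - J).
  by rewrite (negbTE even_gJ) add0n => ->; rewrite subnKC.
elim: q => [|q IH]; first by rewrite addn0.
by rewrite doubleS !addnS -addn2; apply: RSM_add2.
Qed.
End RowSumMatrices.

Lemma morphg1 (gT hT : finGroupType) (f : gT -> hT) :
  {morph f : a b / (a * b)%g} -> f 1%g = 1%g.
Proof. by move=> fM; apply: (mulIg (f 1%g)); rewrite -fM !mul1g. Qed.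

Lemma order_inj_morph (gT hT : finGroupType) (f : gT -> hT) (x : gT) :
  {morph f : a b / (a * b)%g} -> injective f -> #[f x]%g = #[x]%g.
Proof.
move=> fM f_inj.
have fX k : f (x ^+ k)%g = (f x ^+ k)%g.
  by elim: k => [|k IH]; rewrite ?expg0 ?(morphg1 fM) // !expgS fM IH.
have dvd_eq k : (#[f x]%g %| k) = (#[x]%g %| k).
  by rewrite !order_dvdn -fX -(morphg1 fM) (inj_eq f_inj).
by apply/eqP; rewrite eqn_dvd dvd_eq dvdnn -dvd_eq dvdnn.
Qed.

Lemma RSM_transport (gT hT : finGroupType) (f : gT -> hT) (g : nat) (L : seq nat) :
  {morph f : a b / (a * b)%g} -> injective f -> #|gT| = #|hT| ->
  RSM_exists gT g L -> RSM_exists hT g L.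
Proof.
move=> fM f_inj card_eq [M [M_inj permL]].
apply: (@RSM_of_rows _ _ _ (fun i j => f (M i j))).
- by rewrite card_ord.
- by move=> j i1 i2 /f_inj /M_inj.
apply: perm_trans permL; rewrite (@eq_map _ _ _ (fun i => #[\prod_(j < g) M i j]%g)) //.
by move=> i; rewrite -(big_morph f fM (morphg1 fM)) order_inj_morph.
Qed.

Lemma perm_eq_one_exception (X : finType) (x0 : X) (a b : nat) :
  perm_eq [seq if x == x0 then b else a | x <- enum X] (nseq #|X|.-1 a ++ [:: b]).
Proof.
have x0X : x0 \in enum X by rewrite mem_enum.
apply: perm_trans (perm_map _ (perm_to_rem x0X)) _.
rewrite /= eqxx perm_sym perm_catC /= perm_cons cardE -(size_rem x0X).
have: x0 \notin rem x0 (enum X) by rewrite mem_rem_uniq ?enum_uniq // inE eqxx.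
elim: (rem x0 (enum X)) => //= y s IH; rewrite inE negb_or => /andP [y_x0 /IH].
by rewrite eq_sym (negbTE y_x0) perm_cons.
Qed.

Local Open Scope ring_scope.

(* Left-to-right products in a generalized dihedral group Dih(V) = V x Z_2:
   the V-component of (x_1,t_1)...(x_r,t_r) is the signed sum
   x_1 + e_1 x_2 + e_1 e_2 x_3 + ..., with e_i = (-1)^t_i, and the Z_2
   component is the parity of the t_i.  These formulas make sense over any
   zmodType V, which lets us compute them with integer coefficients. *)
Definition dsum (V : zmodType) (s : seq (V * bool)) : V :=
  foldr (fun x acc => x.1 + (if x.2 then - acc else acc)) 0 s.
Definition dpar (V : Type) (s : seq (V * bool)) : bool :=
  foldr (fun x b => x.2 (+) b) false s.
Definition dprodf (V : zmodType) (s : seq (V * bool)) : V * bool :=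
  (dsum s, dpar s).

Definition dmap (U V : Type) (f : U -> V) (x : U * bool) : V * bool := (f x.1, x.2).

Lemma dih_bigprod (A : finZmodType) (s : seq (gdihedral A)) :
  (\prod_(x <- s) x)%g = dprodf s.
Proof. by elim: s => [|x s IH]; rewrite ?big_nil ?big_cons ?IH. Qed.

Section AdditiveMaps.
Variables (U V : zmodType) (f : U -> V).
Hypothesis fB : {morph f : x y / x - y}.

Lemma morphB_0 : f 0 = 0.
Proof. by rewrite -(subrr 0) fB subrr. Qed.
Lemma morphB_N : {morph f : x / - x}.
Proof. by move=> x; rewrite -sub0r fB morphB_0 sub0r. Qed.
Lemma morphB_D : {morph f : x y / x + y}.
Proof. by move=> x y; rewrite -{1}[y]opprK fB morphB_N opprK. Qed.

Lemma dprodf_map (s : seq (U * bool)) :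
  dprodf (map (dmap f) s) = dmap f (dprodf s).
Proof.
rewrite /dprodf /dmap /=; congr pair.
  elim: s => [|x s /= ->]; first by rewrite morphB_0.
  by case: x.2; rewrite morphB_D ?morphB_N.
by elim: s => //= x s ->.
Qed.
End AdditiveMaps.

Lemma dmapM (A B : finZmodType) (h : A -> B) :
  {morph h : x y / x - y} ->
  {morph (dmap h : gdihedral A -> gdihedral B) : x y / (x * y)%g}.
Proof.
move=> hB [x t] [y s]; rewrite /dmap /=; congr pair; rewrite /= (morphB_D hB).
by case: t; rewrite /sgn_act ?(morphB_N hB).
Qed.

Lemma order_rot (A : finZmodType) (a : A) (N : nat) :
  (forall k, (a *+ k == 0) = (N %| k)%N) -> #[(a, false) : gdihedral A]%g = N.
Proof.
move=> ord_a.
have rotX j : (((a, false) : gdihedral A) ^+ j)%g = (a *+ j, false).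
  by elim: j => [|j IH]; rewrite ?expg0 ?mulr0n // expgS IH mulrS.
have dvd_ord k : (#[(a, false) : gdihedral A]%g %| k)%N = (N %| k)%N.
  by rewrite order_dvdn rotX xpair_eqE andbT ord_a.
by apply/eqP; rewrite eqn_dvd dvd_ord dvdnn -dvd_ord dvdnn.
Qed.

(* In an abelian group of odd order, x *~ l = 0 with l in {1, -1, 2, -2}
   forces x = 0 (2 is invertible modulo the exponent). *)
Lemma odd_card_mulrz_eq0 (A : finZmodType) (x : A) (l : int) :
  odd #|A| -> l \in [:: 1; -1; 2; -2] -> x *~ l = 0 -> x = 0.
Proof.
move=> oddA l_small xl0.
have x2 : x *+ 2 = 0.
  move: l_small xl0; rewrite !inE => /or4P [] /eqP ->; rewrite ?mulrNz.
  - by rewrite mulr1z => ->; rewrite mul0rn.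
  - by rewrite mulr1z => /eqP; rewrite oppr_eq0 => /eqP ->; rewrite mul0rn.
  - by [].
  - by move/eqP; rewrite oppr_eq0 => /eqP.
have xA : x *+ #|A| = 0.
  by rewrite -zmodXgE -cardsT expg_cardG ?inE.
have -> : x = x *+ #|A|.+1 by rewrite mulrS xA addr0.
by rewrite -(odd_double_half #|A|) oddA add1n -doubleS -mul2n mulrnA x2 mul0rn.
Qed.

Lemma Zmod_valD (N : nat) (a b : Zmod N) :
  (0 < N)%N -> val (a + b) = ((val a + val b) %% N)%N.
Proof. by case: N a b. Qed.
Lemma Zmod_valMn (N : nat) (a : Zmod N) k :
  (0 < N)%N -> val (a *+ k) = ((val a * k) %% N)%N.
Proof. by case: N a => // N' a _; rewrite Zp_mulrn. Qed.
Lemma Zmod_val_inZp (N k : nat) : (0 < N)%N -> val (inZp k : Zmod N) = (k %% N)%N.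
Proof. by case: N. Qed.

Lemma Zmod_val_lt (N : nat) (a : Zmod N) : (0 < N)%N -> (val a < N)%N.
Proof. by case: N a => // N' a _; exact: ltn_ord. Qed.

Lemma Zmod_mulrn_eq0 (N : nat) (a : Zmod N) k :
  (0 < N)%N -> (a *+ k == 0) = (N %| val a * k)%N.
Proof. by move=> N_gt0; rewrite -val_eqE Zmod_valMn. Qed.

Lemma Zmod1_mulrn_eq0 (N k : nat) :
  (0 < N)%N -> ((inZp 1 : Zmod N) *+ k == 0) = (N %| k)%N.
Proof.
by move=> N_gt0; rewrite Zmod_mulrn_eq0 // Zmod_val_inZp // /dvdn modnMml mul1n.
Qed.

Lemma Zmod_mulrn_morph (N : nat) (V : zmodType) (x : V) :
  (0 < N)%N -> x *+ N = 0 -> {morph (fun a : Zmod N => x *+ val a) : a b / a - b}.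
Proof.
move=> N_gt0 xN; have xmod k : x *+ k = x *+ (k %% N).
  by rewrite {1}(divn_eq k N) mulrnDr mulnC mulrnA xN mul0rn add0r.
move=> a b; apply: (addIr (x *+ val b)).
by rewrite subrK -mulrnDr [LHS]xmod -Zmod_valD // subrK.
Qed.

Definition Kmn (m n : nat) : Type := (Zmod m * Zmod n)%type.
HB.instance Definition _ (m n : nat) := GRing.Zmodule.on (Kmn m n).
HB.instance Definition _ (m n : nat) := Finite.on (Kmn m n).
Definition Hmn (m n : nat) : Type := (Kmn m n * Zmod 4)%type.
HB.instance Definition _ (m n : nat) := GRing.Zmodule.on (Hmn m n).
HB.instance Definition _ (m n : nat) := Finite.on (Hmn m n).

Lemma card_Zmod (N : nat) : (0 < N)%N -> #|Zmod N| = N.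
Proof. by case: N => // N _; rewrite card_ord. Qed.

Lemma CRT_4n_kernel (n b i : nat) : odd n -> (b < n)%N -> (i < 4)%N ->
  (4 * n %| 4 * b + n * i)%N -> b = 0%N /\ i = 0%N.
Proof.
move=> n_odd b_lt i_lt dvd_4n.
have co4n : coprime 4 n by rewrite (_ : 4 = 2 ^ 2)%N // coprime_pexpl // coprime2n.
have /dvdnP [q i_eq] : (4 %| i)%N.
  rewrite -(Gauss_dvdr _ co4n) -(dvdn_addr _ (dvdn_mulr b (dvdnn 4))).
  exact: dvdn_trans (dvdn_mulr n (dvdnn 4)) dvd_4n.
have i0 : i = 0%N by move: i_lt; rewrite i_eq; case: q {i_eq}.
move: dvd_4n; rewrite i0 muln0 addn0 dvdn_pmul2l // => /dvdnP [r b_eq].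
by split=> //; move: b_lt; rewrite b_eq; case: r {b_eq} => // r; rewrite mulSn ltnNge leq_addr.
Qed.

Section Embedding.
Variables m n : nat.
Hypotheses (m_gt0 : (0 < m)%N) (n_gt0 : (0 < n)%N) (n_odd : odd n).

Let n4_gt0 : (0 < 4 * n)%N. Proof. by rewrite muln_gt0. Qed.

Definition psi (x : Hmn m n) : ZmZ4n m n :=
  (x.1.1, (inZp 4 : Zmod (4 * n)) *+ val x.1.2 + (inZp n : Zmod (4 * n)) *+ val x.2).

(* psi is additive, since 4 *+ n = 0 and n *+ 4 = 0 in Z_{4n}. *)
Lemma psiB : {morph psi : x y / x - y}.
Proof.
have fourB := @Zmod_mulrn_morph n _ (inZp 4 : Zmod (4 * n)) n_gt0.
have nB := @Zmod_mulrn_morph 4 _ (inZp n : Zmod (4 * n)) isT.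
have four_n : (inZp 4 : Zmod (4 * n)) *+ n = 0.
  by apply/eqP; rewrite Zmod_mulrn_eq0 // Zmod_val_inZp // /dvdn modnMml modnn.
have n_four : (inZp n : Zmod (4 * n)) *+ 4 = 0.
  by apply/eqP; rewrite Zmod_mulrn_eq0 // Zmod_val_inZp // /dvdn modnMml mulnC modnn.
move=> x y; rewrite /psi; congr pair.
by rewrite (fourB four_n) (nB n_four) [RHS]/= opprD addrACA.
Qed.

Lemma psi_inj : injective psi.
Proof.
move=> x y eq_psi; apply/eqP; rewrite -subr_eq0; move/eqP: eq_psi.
rewrite -subr_eq0 -psiB; move: (x - y) => [[a b] i] /eqP psi0.
have /eqP := congr1 snd psi0; rewrite -val_eqE Zmod_valD // !Zmod_valMn //.
rewrite !Zmod_val_inZp // !modnMml modnDm /= => dvd_4n.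
have [b0 i0] := CRT_4n_kernel n_odd (Zmod_val_lt b n_gt0) (ltn_ord i) dvd_4n.
have -> : a = 0 := congr1 fst psi0.
have -> : b = 0 by apply: val_inj; exact: b0.
by have -> : i = 0 by apply: val_inj; exact: i0.
Qed.

Lemma card_Dih_Hmn : #|{: gdihedral (Hmn m n)}| = (8 * m * n)%N.
Proof.
have -> : #|{: gdihedral (Hmn m n)}| = #|{: (Zmod m * Zmod n * Zmod 4) * bool}| by [].
by rewrite !card_prod !card_Zmod // card_bool; lia.
Qed.

Lemma card_Gamma : #|Gamma m n| = (8 * m * n)%N.
Proof.
have -> : #|Gamma m n| = #|{: (Zmod m * Zmod (4 * n)) * bool}| by [].
by rewrite !card_prod !card_Zmod ?muln_gt0 // card_bool; lia.
Qed.

Lemma RSM_Gamma_of_Hmn (g : nat) (L : seq nat) :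
  RSM_exists (gdihedral (Hmn m n)) g L -> RSM_exists (Gamma m n) g L.
Proof.
apply: (@RSM_transport (gdihedral (Hmn m n)) (Gamma m n) (dmap psi)).
- exact: dmapM psiB.
- move=> [x t] [y s] eq_d.
  by rewrite (psi_inj (congr1 fst eq_d : psi x = psi y)) (congr1 snd eq_d : t = s).
- by rewrite card_Dih_Hmn card_Gamma.
Qed.
End Embedding.

(* Dih(Z_4), the dihedral group of order 8; its elements (i, t) are encoded
   by the numbers i + 4t in 0..7. *)
Definition D4 : finGroupType := gdihedral (Zmod 4).
Definition D4_of_nat (c : nat) : D4 := (inZp c, (4 <= c)%N).
Definition nat_of_D4 (d : D4) : nat := (val d.1 + 4 * d.2)%N.
Definition D4_elems : seq D4 := map D4_of_nat (iota 0 8).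

Lemma mem_D4_elems (d : D4) : d \in D4_elems.
Proof. by case: d => [[[|[|[|[|i]]]] lt_i4] []]. Qed.

Definition injb (f : D4 -> D4) : bool :=
  all (fun d1 => all (fun d2 => (f d1 == f d2) ==> (d1 == d2)) D4_elems) D4_elems.

Lemma injbP (f : D4 -> D4) : injb f -> injective f.
Proof.
move=> /allP f_inj d1 d2 eq_f.
have /allP /(_ d2 (mem_D4_elems d2)) := f_inj d1 (mem_D4_elems d1).
by rewrite eq_f eqxx implyTb => /eqP.
Qed.

(* The rows of the base RSM are indexed by pairs (k, d) with
   k in K = Z_m x Z_n and d in D4; the entry of row (k, d) in a column is an
   element of Dih(K x Z_4) of the form (k l + v c + P p, i ; t), with integer
   coefficients l, c, p, (i, t) in D4, and two fixed elements v, P of K.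
   A formal entry records (l, c, p, i ; t), and formal row products are
   computed with [dprodf] over the integers. *)
Definition Coef : zmodType := (int * int * int * Zmod 4)%type.

(* A column is given by tables indexed by (the codes of) D4: the coefficients
   l(d), c(d), the D4-part D(d), and a permutation S of D4 used to reshuffle
   the rows with k = 0; the coefficient p is constant on the column. *)
Record column := Column {
  colL : seq int; colC : seq int; colP : int; colD : seq nat; colS : seq nat }.

Section ColumnTables.
Variable c : column.
Definition tabL (d : D4) : int := nth 0 (colL c) (nat_of_D4 d).
Definition tabC (d : D4) : int := nth 0 (colC c) (nat_of_D4 d).
Definition tabD (d : D4) : D4 := D4_of_nat (nth 0%N (colD c) (nat_of_D4 d)).
Definition tabS (d : D4) : D4 := D4_of_nat (nth 0%N (colS c) (nat_of_D4 d)).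

Definition fentry (d : D4) : Coef * bool :=
  ((tabL d, tabC d, colP c, (tabD d).1), (tabD d).2).

(* Column conditions: D and S are injective, and l(d) is invertible modulo
   any odd number. *)
Definition column_ok : bool :=
  [&& injb tabD, injb tabS & all (fun d => tabL d \in [:: 1; -1; 2; -2]) D4_elems].
End ColumnTables.

Record design := Design { dcols : seq column; dstar : D4 }.
Definition col0 : column := Column [::] [::] 0 [::] [::].

(* Formal row (k, d) of a design; the flag z records whether k = 0. *)
Definition frow (des : design) (z : bool) (d : D4) : seq (Coef * bool) :=
  [seq fentry c (if z then tabS c d else d) | c <- dcols des].

(* Forgetting the coefficient l, which is irrelevant when k = 0. *)
Definition dropL (x : Coef) : Coef := (0, x.1.1.2, x.1.2, x.2).

(* The two possible formal row products: P (all rows but one) and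
   P + 2v together with the rotation 2 of Z_4 (row (0, dstar)). *)
Definition fgeneric : Coef * bool := ((0, 0, 1, 0), false).
Definition fspecial : Coef * bool := ((0, 2, 1, inZp 1 *+ 2), false).

Definition design_ok (des : design) : bool :=
  [&& all column_ok (dcols des),
      all (fun d => dprodf (frow des false d) == fgeneric) D4_elems &
      all (fun d => dmap dropL (dprodf (frow des true d))
                    == if d == dstar des then fspecial else fgeneric) D4_elems].

Lemma pair_eq0 (U V : zmodType) (a : U) (b : V) : ((a, b) == 0) = (a == 0) && (b == 0).
Proof. by []. Qed.

Section DesignToRSM.
Variables m n : nat.
Hypotheses (m_gt0 : (0 < m)%N) (m_odd : odd m) (n_gt0 : (0 < n)%N) (n_odd : odd n).
Local Notation K := (Kmn m n).
Local Notation H := (Hmn m n).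

Let u : K := (inZp 1, 0).
Let w : K := (0, inZp 1).

(* Evaluation of a formal entry in row (k, _): v = w - u and P = 2u. *)
Definition ev (k : K) (x : Coef) : H :=
  (k *~ x.1.1.1 + (w - u) *~ x.1.1.2 + (u *+ 2) *~ x.1.2, x.2).

Lemma evB (k : K) : {morph ev k : x y / x - y}.
Proof.
move=> x y; rewrite /ev /=; congr pair; rewrite !mulrzBr [RHS]/= !opprD.
by rewrite [RHS]addrACA; congr (_ + _); rewrite addrACA.
Qed.

Lemma ev0_dropL (x : Coef) : ev 0 x = ev 0 (dropL x).
Proof. by rewrite /ev /= !mul0rz. Qed.

Definition entry (c : column) (x : K * D4) : gdihedral H :=
  dmap (ev x.1) (fentry c (if x.1 == 0 then tabS c x.2 else x.2)).

Lemma entry_prod (des : design) (x : K * D4) :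
  (\prod_(j < size (dcols des)) entry (nth col0 (dcols des) j) x)%g
  = dmap (ev x.1) (dprodf (frow des (x.1 == 0) x.2)).
Proof.
rewrite -(big_mkord xpredT (fun j => entry (nth col0 (dcols des) j) x)).
rewrite -(big_nth col0 xpredT (entry^~ x)) -(big_map (entry^~ x) xpredT id).
rewrite dih_bigprod -dprodf_map; last exact: evB.
by rewrite /frow -map_comp.
Qed.

Lemma card_K_odd : odd #|{: K}|.
Proof.
have -> : #|{: K}| = #|{: Zmod m * Zmod n}| by [].
by rewrite card_prod !card_Zmod // oddM m_odd n_odd.
Qed.

Lemma reshuffle_inj (c : column) : column_ok c ->
  injective (fun x : K * D4 => (x.1, if x.1 == 0 then tabS c x.2 else x.2)).
Proof.
case/and3P=> _ /injbP S_inj _ [k d] [k' d'] /= [<-].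
by case: (k == 0) => [/S_inj|] ->.
Qed.

(* Evaluating the formal entries of a column is injective on K x D4: the
   D4-part determines d, and then k l(d) determines k since l(d) is
   invertible modulo the odd order of K. *)
Lemma eval_inj (c : column) : column_ok c ->
  injective (fun y : K * D4 => dmap (ev y.1) (fentry c y.2)).
Proof.
case/and3P=> /injbP D_inj _ /allP L_ok [k d] [k' d'] eq_y.
have eq_D : tabD c d = tabD c d'.
  apply: injective_projections; first exact: (congr1 (fun z => z.1.2) eq_y).
  exact: (congr1 snd eq_y).
move: eq_y; rewrite -(D_inj _ _ eq_D) => eq_y.
have eq_k : k *~ tabL c d = k' *~ tabL c d.
  apply: (addIr ((w - u) *~ tabC c d)); apply: (addIr ((u *+ 2) *~ colP c)).
  exact: (congr1 (fun z => z.1.1) eq_y).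
have: (k - k') *~ tabL c d = 0 by rewrite mulrzBl eq_k subrr.
move/(odd_card_mulrz_eq0 card_K_odd (L_ok d (mem_D4_elems d))).
by move/eqP; rewrite subr_eq0 => /eqP ->.
Qed.

Definition generic_row : gdihedral H := ((u *+ 2, 0), false).
Definition special_row : gdihedral H := ((w *+ 2, inZp 1 *+ 2), false).

Lemma ev_fgeneric (k : K) : dmap (ev k) fgeneric = generic_row.
Proof. by rewrite /dmap /ev /= !mulr0z !add0r mulr1z. Qed.

Lemma ev_fspecial : dmap (ev 0) fspecial = special_row.
Proof. by rewrite /dmap /ev /= mulr0z add0r mulr1z mulrz_nat mulrnBl subrK. Qed.

Lemma design_row_prod (des : design) (x : K * D4) : design_ok des ->
  (\prod_(j < size (dcols des)) entry (nth col0 (dcols des) j) x)%g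
  = if x == (0, dstar des) then special_row else generic_row.
Proof.
case/and3P=> _ /allP generic_ok /allP special_ok; rewrite entry_prod.
case: x => k d /=; have [-> | k_nz] := eqVneq k 0.
- rewrite {1}/dmap ev0_dropL -[(ev 0 _, _)]/(dmap (ev 0) (dmap dropL _)).
  rewrite (eqP (special_ok d (mem_D4_elems d))) xpair_eqE eqxx /=.
  by case: (d == dstar des); [exact: ev_fspecial | exact: ev_fgeneric].
- rewrite (eqP (generic_ok d (mem_D4_elems d))) ev_fgeneric.
  by rewrite xpair_eqE (negbTE k_nz).
Qed.

Lemma order_generic_row : #[generic_row]%g = m.
Proof.
apply: order_rot => k; rewrite pairMnE pair_eq0 mul0rn eqxx andbT /=.
rewrite -mulrnA pairMnE pair_eq0 mul0rn eqxx andbT /= Zmod1_mulrn_eq0 //.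
by rewrite Gauss_dvdr // coprimen2.
Qed.

Lemma order_special_row : #[special_row]%g = (2 * n)%N.
Proof.
apply: order_rot => k; rewrite pairMnE pair_eq0 /= -!mulrnA pairMnE pair_eq0 /=.
rewrite mul0rn eqxx /= !Zmod1_mulrn_eq0 // Gauss_dvdr ?coprimen2 //.
rewrite (_ : 4 = 2 * 2)%N // dvdn_pmul2l // Gauss_dvd ?coprime2n //.
by rewrite andbC.
Qed.

Lemma card_rows : #|{: K * D4}| = (8 * m * n)%N.
Proof.
have -> : #|{: K * D4}| = #|{: (Zmod m * Zmod n) * (Zmod 4 * bool)}| by [].
by rewrite !card_prod !card_Zmod // card_bool; lia.
Qed.

Lemma RSM_of_design (des : design) : design_ok des ->
  RSM_exists (gdihedral H) (size (dcols des)) (nseq (8 * m * n - 1) m ++ [:: 2 * n])%N.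
Proof.
move=> des_ok; case/and3P: (des_ok) => /(all_nthP col0) cols_ok _ _.
apply: (@RSM_of_rows _ _ (K * D4)%type (fun x j => entry (nth col0 (dcols des) j) x)).
- by rewrite card_rows card_Dih_Hmn.
- move=> j; have c_ok := cols_ok j (ltn_ord j).
  exact: inj_comp (eval_inj c_ok) (reshuffle_inj c_ok).
rewrite (@eq_map _ _ _ (fun x => if x == (0, dstar des) then (2 * n)%N else m)).
  by rewrite -card_rows subn1; exact: perm_eq_one_exception.
move=> x; rewrite design_row_prod //.
by case: ifP => _; [exact: order_special_row | exact: order_generic_row].
Qed.

End DesignToRSM.

Definition design3 : design := Design
  [:: Column [:: 1; 1; 1; 1; 1; 1; 1; 1] [:: -1; 0; 0; 0; 0; 1; 0; 0] 1
        [:: 0; 1; 2; 3; 4; 5; 6; 7] [:: 0; 1; 2; 3; 4; 5; 6; 7];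
      Column [:: 1; 1; 1; 1; -1; -1; -1; -1] [:: 0; 0; 0; 0; 0; 1; 0; 0] 0
        [:: 2; 6; 4; 0; 3; 1; 5; 7] [:: 5; 1; 2; 3; 4; 6; 0; 7];
      Column [:: -2; 2; 2; -2; 2; 2; -2; -2] [:: 1; 0; 0; 0; 0; 0; 0; 0] 0
        [:: 2; 7; 6; 1; 5; 4; 3; 0] [:: 6; 1; 2; 3; 4; 0; 5; 7]]
  (D4_of_nat 5).

Definition design4 : design := Design
  [:: Column [:: 1; 1; 1; 1; 1; 1; 1; 1] [:: 1; 1; 0; 0; 0; 0; 0; 0] 1
        [:: 0; 1; 2; 3; 4; 5; 6; 7] [:: 0; 1; 2; 3; 4; 5; 6; 7];
      Column [:: 1; 1; 1; 1; 1; 1; 1; 1] [:: -2; -1; 0; 0; 0; 0; 0; 0] 0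
        [:: 0; 3; 2; 1; 4; 5; 6; 7] [:: 1; 7; 2; 3; 4; 5; 6; 0];
      Column [:: -1; -1; -1; -1; 1; 1; 1; 1] [:: 1; 0; 0; 0; 0; 0; 0; 0] 0
        [:: 4; 0; 6; 1; 3; 7; 2; 5] [:: 7; 0; 2; 3; 4; 5; 6; 1];
      Column [:: 1; -1; 1; -1; -1; 1; -1; 1] [:: 0; 0; 0; 0; 0; 0; 0; 0] 0
        [:: 4; 0; 6; 3; 1; 7; 2; 5] [:: 0; 1; 2; 3; 4; 5; 6; 7]]
  (D4_of_nat 7).

Lemma design3_ok : design_ok design3. Proof. by vm_compute. Qed.
Lemma design4_ok : design_ok design4. Proof. by vm_compute. Qed.

Local Close Scope ring_scope.

Theorem mainTheorem12 (m n g : nat) :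
  0 < m -> odd m -> 3 <= n -> odd n -> 3 <= g ->
  RSM_exists (Gamma m n) g (nseq (8 * m * n - 1) m ++ [:: 2 * n]).
Proof.
move=> m_gt0 m_odd n_ge3 n_odd g_ge3; have n_gt0 : 0 < n by apply: leq_trans n_ge3.
pose des := if odd g then design3 else design4.
have des_ok : design_ok des.
  by rewrite /des; case: ifP => _; [exact: design3_ok | exact: design4_ok].
have size_le : size (dcols des) <= g.
  rewrite /des; case: ifP => //= g_even.
  by rewrite ltn_neqAle g_ge3 andbT; apply: contraFneq g_even => <-.
have size_parity : ~~ odd (g - size (dcols des)).
  by rewrite oddB // /des; case: (odd g).
apply: RSM_add_even size_le size_parity.
apply: (RSM_Gamma_of_Hmn m_gt0 n_gt0 n_odd).
exact: (RSM_of_design m_gt0 m_odd n_gt0 n_odd des_ok).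
Qed.
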